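(* Let $\{\tau_n\}$ be a nonnegative sequence and $\{b_n\}$ a strictly positive non-decreasing sequence. Let $X$ be a random variable with $\sum_{n=1}^\infty\tau_nnP(|X|\ge b_n)<\infty$. Fix $\nu\in[0,\infty)$ and put $T_k=\sum_{n=1}^kn\tau_n$. Suppose there are constants $C\in(0,\infty)$ and $\theta\in[1,\infty)$ such that $$\frac{b_n^{\nu\theta}}{n^{\theta-1}}\sum_{k=n}^\infty\frac{k^\theta\tau_k}{b_k^{\nu\theta}}\le CT_{n-1}\quad\text{for all }n\ge2,$$ and $$\frac{kb_n^\nu}{b_k^\nu}\le CT_{n-1}\quad\text{whenever }k\ge n\ge2.$$ Then $$\sum_{n=1}^\infty\tau_n\left(\frac{nE[|X|^\nu1_{\{|X|<b_n\}}]}{b_n^\nu}\right)^{\theta}<\infty.$$ *)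

From HB Require Import structures.
From mathcomp Require Import all_boot all_order all_algebra.
From mathcomp Require Import all_classical all_reals all_analysis.
Set Implicit Arguments. Unset Strict Implicit. Unset Printing Implicit Defensive.
Import Order.TTheory GRing.Theory Num.Theory.
Local Open Scope ring_scope.

Definition Tsum (R : realType) (tau : nat -> R) (k : nat) : R :=
  \sum_(1 <= n < k.+1) (n%:R * tau n).

(* E[|X|^nu 1_{|X| < c}] (finite, as the integrand is bounded by c^nu) *)
Definition trunc_moment (d : measure_display) (T : measurableType d)
  (R : realType) (P : probability T R) (X : {RV P >-> R}) (nu c : R) : R :=
  fine (\int[P]_x ((powR `|X x| nu * (`|X x| < c)%R%:R)%R)%:E)%E.

(* Put c_n = b_n^nu and p_j = P(b_(j-1) <= |X| < b_j) with b_0 = 0.  Cutting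
   {|X| < b_n} into these slabs bounds E[|X|^nu 1_{|X| < b_n}] by
   S_n = sum_(j <= n) c_j p_j, and Young's inequality gives the discrete chain
   rule S_n^theta <= theta sum_(j <= n) c_j p_j S_j^(theta - 1).  Exchanging the
   order of summation, the series is at most
     theta sum_j c_j p_j S_j^(theta - 1) sum_(n >= j) tau_n (n / c_n)^theta.
   The first hypothesis bounds the inner tail by C T_(j-1) (j / c_j)^(theta - 1) / c_j,
   the second one keeps (j / c_j) S_j bounded, and what is left, sum_j p_j T_(j-1),
   is by Abel summation at most sum_n n tau_n P(|X| >= b_n) < oo. *)

From HB Require Import structures.
From mathcomp Require Import all_boot all_order all_algebra.
From mathcomp Require Import all_classical all_reals all_analysis.
From mathcomp Require Import ring lra measurable_realfun.
Import Order.TTheory GRing.Theory Num.Theory.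
Local Open Scope ring_scope.
Local Open Scope classical_set_scope.

Lemma powRV {R : realType} (x r : R) : 0 <= x -> (x^-1) `^ r = (x `^ r)^-1.
Proof. by move=> x0; rewrite -powR_inv1 // powRAC powR_inv1 ?powR_ge0. Qed.

Lemma powR_div {R : realType} (x y r : R) : 0 <= x -> 0 <= y ->
  (x / y) `^ r = x `^ r / y `^ r.
Proof. by move=> x0 y0; rewrite powRM ?invr_ge0 // powRV. Qed.

(* Young's inequality for [u] and [v `^ (th - 1)] with exponents [th] and [th / (th - 1)]. *)
Lemma powR_sub_le {R : realType} (th u v : R) : 1 <= th -> 0 <= u -> 0 <= v ->
  v `^ th - u `^ th <= th * (v - u) * v `^ (th - 1).
Proof.
move=> th_ge1 u0 v0.
have [->|th_neq1] := eqVneq th 1.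
  by rewrite subrr powRr0 !powRr1 // mul1r mulr1.
have th_gt1 : 1 < th by rewrite lt_neqAle eq_sym th_neq1 th_ge1.
have th_gt0 : 0 < th by lra.
have th1_gt0 : 0 < th - 1 by rewrite subr_gt0.
set w := v `^ (th - 1).
have conj_gt0 : 0 < th / (th - 1) by apply: divr_gt0.
have conj_exp : th^-1 + (th / (th - 1))^-1 = 1.
  by rewrite invf_div; field; rewrite gt_eqF.
have young := conjugate_powR u0 (powR_ge0 v (th - 1)) th_gt0 conj_gt0 conj_exp.
have w_conj : w `^ (th / (th - 1)) = v `^ th.
  by rewrite /w -powRrM mulrC divfK // gt_eqF.
have v_th : v `^ th = v * w by rewrite /w mulr_powRB1.
rewrite w_conj v_th in young; rewrite v_th.
suff : th * (u * w) <= u `^ th + (th - 1) * (v * w) by nra.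
have := ler_wpM2l (ltW th_gt0) young.
suff -> : th * (u `^ th / th + v * w / (th / (th - 1))) =
          u `^ th + (th - 1) * (v * w) by [].
by field; rewrite ?gt_eqF.
Qed.

Lemma powR_partial_sums_le {R : realType} (th : R) (x : nat -> R) n : 1 <= th ->
  (forall j, (1 <= j)%N -> 0 <= x j) ->
  (\sum_(1 <= j < n.+1) x j) `^ th <=
  th * \sum_(1 <= j < n.+1) x j * (\sum_(1 <= i < j.+1) x i) `^ (th - 1).
Proof.
move=> th_ge1 x_ge0.
have sum_ge0 k : 0 <= \sum_(1 <= j < k) x j.
  by rewrite big_nat; apply: sumr_ge0 => i /andP[/x_ge0].
elim: n => [|n IHn].
  by rewrite !big_geq // mulr0 powR0 // gt_eqF // (lt_le_trans ltr01 th_ge1).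
set s := \sum_(1 <= j < n.+1) x j in IHn *.
have sumS : \sum_(1 <= j < n.+2) x j = s + x n.+1 by rewrite big_nat_recr.
have step := @powR_sub_le _ th _ _ th_ge1 (sum_ge0 n.+1) (sum_ge0 n.+2).
rewrite -/s sumS addrAC subrr add0r lerBlDl in step.
rewrite sumS big_nat_recr //= sumS mulrDr.
by apply: le_trans step _; rewrite -mulrA lerD2r.
Qed.

Lemma exchange_big_nat_triangular {R : zmodType} (G : nat -> nat -> R) m :
  \sum_(1 <= n < m) \sum_(1 <= j < n.+1) G n j =
  \sum_(1 <= j < m) \sum_(j <= n < m) G n j.
Proof.
elim: m => [|[|m] IHm]; first by rewrite !big_geq.
  by rewrite !big_geq.
rewrite big_nat_recr //= IHm [in RHS]big_nat_recr //= big_nat1.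
rewrite [X in _ + X]big_nat_recr //= addrA -big_split; congr (_ + _).
by apply: eq_big_nat => j /andP[_ jm]; rewrite [in RHS](big_nat_recr _ _ _ (ltnW jm)).
Qed.

Lemma Tsum_ge0 {R : realType} (tau : nat -> R) k :
  (forall n, (1 <= n)%N -> 0 <= tau n) -> 0 <= Tsum tau k.
Proof.
move=> tau_ge0; rewrite /Tsum big_nat; apply: sumr_ge0 => n /andP[n1 _].
by rewrite mulr_ge0 ?tau_ge0.
Qed.

Lemma sum_increments_Tsum {R : realType} (tau F : nat -> R) m :
  \sum_(2 <= i < m.+1) (F i - F i.-1) * Tsum tau i.-1 =
  \sum_(1 <= n < m.+1) n%:R * tau n * (F m - F n).
Proof.
elim: m => [|[|m] IHm]; first by rewrite !big_geq.
  by rewrite big_geq // big_nat1 subrr mulr0.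
rewrite big_nat_recr //= IHm [in RHS]big_nat_recr //= subrr mulr0 addr0.
rewrite /Tsum mulr_sumr -big_split /=.
by apply: eq_big_nat => n _; ring.
Qed.

Lemma sum_increments_Tsum_le {R : realType} (tau F : nat -> R) M :
  (forall n, (1 <= n)%N -> 0 <= tau n) -> (forall n, F n <= 1) ->
  (forall m, \sum_(1 <= n < m) n%:R * tau n * (1 - F n) <= M) ->
  forall m, \sum_(2 <= i < m) (F i - F i.-1) * Tsum tau i.-1 <= M.
Proof.
move=> tau_ge0 F_le1 sum_le [|m].
  by rewrite big_geq //; have := sum_le 0%N; rewrite big_geq.
rewrite sum_increments_Tsum; apply: le_trans (sum_le m.+1).
apply: ler_sum_nat => n /andP[n1 _].
by apply: ler_wpM2l; rewrite ?mulr_ge0 ?tau_ge0 // lerD2r.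
Qed.

Section WeightedPowerSums.
Context {R : realType} {tau c p : nat -> R} {C theta M : R}.
Hypotheses (tau_ge0 : forall n, (1 <= n)%N -> 0 <= tau n)
  (c_gt0 : forall n, (1 <= n)%N -> 0 < c n) (c1_le_c2 : c 1%N <= c 2%N)
  (p_ge0 : forall n, 0 <= p n) (p1_le1 : p 1%N <= 1)
  (C_gt0 : 0 < C) (theta_ge1 : 1 <= theta).
Hypothesis tail_le : forall j m, (2 <= j)%N ->
  \sum_(j <= k < m) tau k * (k%:R / c k) `^ theta <=
  C * Tsum tau j.-1 * (j%:R / c j) `^ (theta - 1) / c j.
Hypothesis ratio_le : forall i j, (2 <= i)%N -> (i <= j)%N ->
  j%:R * c i / c j <= C * Tsum tau i.-1.
Hypothesis increments_Tsum_le : forall m,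
  \sum_(2 <= i < m) p i * Tsum tau i.-1 <= M.

Local Notation ratio n := (n%:R / c n).
Local Notation psum n := (\sum_(1 <= j < n.+1) c j * p j).

Let ratio_ge0 n : (1 <= n)%N -> 0 <= ratio n.
Proof. by move=> n1; rewrite divr_ge0 // ltW // c_gt0. Qed.

Let psum_ge0 n : 0 <= psum n.
Proof.
by rewrite big_nat; apply: sumr_ge0 => j /andP[j1 _]; rewrite mulr_ge0 // ltW // c_gt0.
Qed.

Let M_ge0 : 0 <= M.
Proof. by have := increments_Tsum_le 0%N; rewrite big_geq. Qed.

Lemma ratio_psum_le j : (2 <= j)%N -> ratio j * psum j <= C * Tsum tau 1 + C * M.
Proof.
move=> j2; have cj_gt0 := c_gt0 j (ltnW j2).
rewrite mulr_sumr big_ltn; last exact: ltnW.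
apply: lerD.
  (* [ratio_le] does not cover [i = 1]; compare with [i = 2] using [c 1 <= c 2]. *)
  apply: le_trans (ratio_le 2 j (leqnn 2) j2).
  rewrite [leLHS](_ : _ = j%:R * c 1%N / c j * p 1%N); last by field; rewrite gt_eqF.
  apply: le_trans (_ : j%:R * c 1%N / c j <= _).
    rewrite -[leRHS]mulr1; apply: ler_wpM2l => //.
    by rewrite divr_ge0 ?mulr_ge0 // ltW // c_gt0.
  by apply: ler_wpM2r; [rewrite invr_ge0 ltW | apply: ler_wpM2l].
apply: le_trans (_ : \sum_(2 <= i < j.+1) C * (p i * Tsum tau i.-1) <= _).
  apply: ler_sum_nat => i /andP[i2 ij].
  rewrite [leLHS](_ : _ = j%:R * c i / c j * p i); last by field; rewrite gt_eqF.
  by rewrite [leRHS]mulrCA [leRHS]mulrC; apply: ler_wpM2r => //; exact: ratio_le.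
by rewrite -mulr_sumr; apply: ler_wpM2l; [exact: ltW | exact: increments_Tsum_le].
Qed.

Lemma tail_ratio_sum_le m :
  \sum_(1 <= n < m) tau n * ratio n `^ theta <=
  tau 1%N * ratio 1%N `^ theta + C * Tsum tau 1 * ratio 2%N `^ (theta - 1) / c 2%N.
Proof.
have bound_ge0 : 0 <= tau 1%N * ratio 1%N `^ theta +
    C * Tsum tau 1 * ratio 2%N `^ (theta - 1) / c 2%N.
  by rewrite addr_ge0 ?mulr_ge0 ?tau_ge0 ?powR_ge0 ?Tsum_ge0 ?invr_ge0 ?ltW ?c_gt0.
case: m => [|[|m]]; try by rewrite big_geq.
by rewrite big_ltn // lerD2l tail_le.
Qed.

Lemma sum_powR_ratio_psum_le m :
  \sum_(1 <= n < m) tau n * (ratio n * psum n) `^ theta <=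
  theta * \sum_(1 <= j < m)
    c j * p j * psum j `^ (theta - 1) * \sum_(j <= n < m) tau n * ratio n `^ theta.
Proof.
rewrite [leRHS](_ : _ = \sum_(1 <= n < m) \sum_(1 <= j < n.+1)
    theta * (c j * p j * psum j `^ (theta - 1) * (tau n * ratio n `^ theta))); last first.
  rewrite exchange_big_nat_triangular mulr_sumr; apply: eq_big_nat => j _.
  by rewrite !mulr_sumr; apply: eq_big_nat => n _; ring.
apply: ler_sum_nat => n /andP[n1 _].
rewrite [leRHS](_ : _ = tau n * ratio n `^ theta *
    (theta * \sum_(1 <= j < n.+1) c j * p j * psum j `^ (theta - 1))); last first.
  by rewrite !mulr_sumr; apply: eq_bigr => j _; ring.
rewrite powRM ?ratio_ge0 // mulrA; apply: ler_wpM2l.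
  by rewrite mulr_ge0 ?tau_ge0 ?powR_ge0.
apply: powR_partial_sums_le => // j j1.
by rewrite mulr_ge0 // ltW // c_gt0.
Qed.

Lemma weighted_tail_le j m : (2 <= j)%N ->
  c j * p j * psum j `^ (theta - 1) * \sum_(j <= n < m) tau n * ratio n `^ theta <=
  C * (C * Tsum tau 1 + C * M) `^ (theta - 1) * (p j * Tsum tau j.-1).
Proof.
move=> j2; have cj_gt0 := c_gt0 j (ltnW j2).
apply: le_trans (_ : c j * p j * psum j `^ (theta - 1) *
    (C * Tsum tau j.-1 * ratio j `^ (theta - 1) / c j) <= _).
  by apply: ler_wpM2l; [rewrite !mulr_ge0 ?powR_ge0 // ltW | exact: tail_le].
rewrite [leLHS](_ : _ = C * (p j * Tsum tau j.-1) * (ratio j * psum j) `^ (theta - 1)).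
  rewrite mulrAC; apply: ler_wpM2r; first by rewrite mulr_ge0 ?Tsum_ge0.
  apply: ler_wpM2l; first exact: ltW.
  apply: ge0_ler_powR; rewrite ?nnegrE ?subr_ge0 ?ratio_psum_le //.
    by rewrite mulr_ge0 // ratio_ge0 // ltnW.
  by rewrite addr_ge0 // mulr_ge0 ?Tsum_ge0 // ltW.
by rewrite [in RHS]powRM ?ratio_ge0 ?(ltnW j2) //; field; rewrite gt_eqF.
Qed.

Lemma sum_powR_ratio_psum_bounded : exists K, forall m,
  \sum_(1 <= n < m) tau n * (ratio n * psum n) `^ theta <= K.
Proof.
set K1 := tau 1%N * ratio 1%N `^ theta +
          C * Tsum tau 1 * ratio 2%N `^ (theta - 1) / c 2%N.
set K2 := C * Tsum tau 1 + C * M.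
have K1_ge0 : 0 <= K1 by apply: le_trans (tail_ratio_sum_le 0%N); rewrite big_geq.
have K2_ge0 : 0 <= K2 by rewrite addr_ge0 // mulr_ge0 ?Tsum_ge0 // ltW.
set K := c 1%N * p 1%N * psum 1%N `^ (theta - 1) * K1 + C * K2 `^ (theta - 1) * M.
have K_ge0 : 0 <= K by rewrite /K addr_ge0 ?mulr_ge0 ?powR_ge0 // ltW // c_gt0.
exists (theta * K) => m; apply: le_trans (sum_powR_ratio_psum_le m) _.
apply: ler_wpM2l; first exact: le_trans ler01 theta_ge1.
case: m => [|[|m]]; try by rewrite big_geq.
rewrite big_ltn //; apply: lerD.
  apply: ler_wpM2l; last exact: tail_ratio_sum_le.
  by rewrite !mulr_ge0 ?powR_ge0 // ltW // c_gt0.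
apply: le_trans (_ : \sum_(2 <= j < m.+2) C * K2 `^ (theta - 1) * (p j * Tsum tau j.-1) <= _).
  by apply: ler_sum_nat => j /andP[j2 _]; exact: weighted_tail_le.
rewrite -mulr_sumr; apply: ler_wpM2l; last exact: increments_Tsum_le.
by rewrite mulr_ge0 ?powR_ge0 // ltW.
Qed.

End WeightedPowerSums.

Lemma powR_le_sum_slabs {R : realType} (a : nat -> R) (nu y : R) n :
  0 <= nu -> a 0%N <= 0 -> 0 <= y -> y < a n ->
  y `^ nu <= \sum_(1 <= j < n.+1) a j `^ nu * ((y < a j) && ~~ (y < a j.-1))%:R.
Proof.
move=> nu_ge0 a0_le0 y_ge0; elim: n => [|n IHn] y_lt.
  by have := lt_le_trans y_lt a0_le0; rewrite ltNge y_ge0.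
have sum_ge0 : 0 <= \sum_(1 <= j < n.+1) a j `^ nu * ((y < a j) && ~~ (y < a j.-1))%:R.
  by rewrite big_nat; apply: sumr_ge0 => j _; rewrite mulr_ge0 ?powR_ge0.
rewrite big_nat_recr //= y_lt /=.
have [y_lt_an|y_ge_an] := boolP (y < a n).
  by apply: le_trans (IHn y_lt_an) _; rewrite lerDl mulr_ge0 ?powR_ge0.
rewrite mulr1; apply: ler_wpDl => //.
by apply: ge0_ler_powR; rewrite ?nnegrE // ltW // (le_lt_trans y_ge0).
Qed.

(* [level b] puts the level [0] in front of [b], so that for [n >= 1] the slabs
   [{level b (j - 1) <= |X| < level b j}], [1 <= j <= n], partition [{|X| < b n}]. *)
Definition level {R : realType} (b : nat -> R) (k : nat) : R :=
  if k is 0 then 0 else b k.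

Lemma level_nondecreasing {R : realType} (b : nat -> R) :
  (forall n, (1 <= n)%N -> 0 < b n) ->
  (forall m n, (1 <= m)%N -> (m <= n)%N -> b m <= b n) ->
  {homo level b : m n / (m <= n)%N >-> m <= n}.
Proof.
move=> b_gt0 b_nd [|m] [|n] //= mn; first exact: ltW (b_gt0 _ _).
exact: b_nd.
Qed.

Section AbsoluteValueLaw.
Context {d} {T : measurableType d} {R : realType} {P : probability T R}.
Variable X : {RV P >-> R}.

Lemma measurable_abs_lt (c : R) : measurable [set x | `|X x| < c].
Proof.
have := measurable_funP X measurableT _ (measurable_itv `]-c, c[%R).
by rewrite setTI; congr measurable; apply/seteqP; split => x /=; rewrite in_itv /= ltr_norml.
Qed.

Definition prob_abs_lt (c : R) : R := fine (P [set x | `|X x| < c]).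

Lemma prob_abs_ltE (c : R) : P [set x | `|X x| < c] = (prob_abs_lt c)%:E.
Proof. by rewrite fineK //; apply: fin_num_measure; exact: measurable_abs_lt. Qed.

Lemma prob_abs_lt_ge0 (c : R) : 0 <= prob_abs_lt c.
Proof. by rewrite -lee_fin -prob_abs_ltE measure_ge0. Qed.

Lemma prob_abs_lt_le1 (c : R) : prob_abs_lt c <= 1.
Proof.
by rewrite -lee_fin -prob_abs_ltE; apply: probability_le1; exact: measurable_abs_lt.
Qed.

Lemma probability_abs_ge (c : R) : P [set x | c <= `|X x|] = (1 - prob_abs_lt c)%:E.
Proof.
have -> : [set x | c <= `|X x|] = ~` [set x | `|X x| < c].
  by apply/seteqP; split => x /=; rewrite leNgt => /negP.
by rewrite probability_setC ?prob_abs_ltE //; exact: measurable_abs_lt.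
Qed.

Lemma probability_abs_in (c1 c2 : R) : c1 <= c2 ->
  P ([set x | `|X x| < c2] `\` [set x | `|X x| < c1]) =
  (prob_abs_lt c2 - prob_abs_lt c1)%:E.
Proof.
move=> c12.
have := measureDI P (measurable_abs_lt c2) (measurable_abs_lt c1).
rewrite setIidr => [|x /= /lt_le_trans]; last exact.
rewrite EFinB -!prob_abs_ltE => ->.
by rewrite addeK //; apply: fin_num_measure; exact: measurable_abs_lt.
Qed.

Lemma prob_abs_lt_le (c1 c2 : R) : c1 <= c2 -> prob_abs_lt c1 <= prob_abs_lt c2.
Proof.
by move=> c12; rewrite -subr_ge0 -lee_fin -probability_abs_in.
Qed.

Lemma trunc_moment_ge0 (nu c : R) : 0 <= trunc_moment X nu c.
Proof.
apply: fine_ge0; apply: integral_ge0 => x _.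
by rewrite lee_fin mulr_ge0 ?powR_ge0.
Qed.

Local Notation slab a j := ([set x | `|X x| < a j] `\` [set x | `|X x| < a j.-1]).

Lemma measurable_abs_powR_lt (nu c : R) :
  measurable_fun setT (fun x => (`|X x| `^ nu * (`|X x| < c)%R%:R)%:E).
Proof.
have mabsX : measurable_fun setT (fun x => `|X x|).
  exact: measurableT_comp (@normr_measurable R setT) (@measurable_funP _ _ _ _ setT X).
apply/measurable_EFinP/measurable_funM.
  exact: measurableT_comp (measurable_powR nu) mabsX.
have -> : (fun x => (`|X x| < c)%R%:R) = \1_[set x | `|X x| < c] :> (T -> R).
  by apply/funext => x; rewrite indicE /in_mem /= /in_set asboolb.
exact/measurable_indic/measurable_abs_lt.
Qed.

Lemma integral_sum_slabs (a w : nat -> R) n :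
  {homo a : i j / (i <= j)%N >-> i <= j} -> (forall j, 0 <= w j) ->
  (\int[P]_x (\sum_(1 <= j < n.+1) (w j * \1_(slab a j) x)%:E) =
   (\sum_(1 <= j < n.+1) w j * (prob_abs_lt (a j) - prob_abs_lt (a j.-1)))%:E)%E.
Proof.
move=> a_nd w_ge0.
have mslab j : measurable (slab a j) by apply: measurableD; exact: measurable_abs_lt.
rewrite ge0_integral_sum //; first last.
- by move=> j x _; rewrite lee_fin mulr_ge0.
- move=> j; apply/measurable_EFinP/measurable_funM; first exact: measurable_cst.
  exact: measurable_indic.
rewrite -sumEFin; apply: eq_big_nat => j _.
rewrite (integralZl_indic _ (fun=> slab a j)) //; last by rewrite ltNge w_ge0.
by rewrite integral_indic // setIT EFinM -probability_abs_in ?a_nd ?leq_pred.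
Qed.

Lemma trunc_moment_le (a : nat -> R) (nu : R) n : 0 <= nu -> a 0%N = 0 ->
  {homo a : i j / (i <= j)%N >-> i <= j} ->
  trunc_moment X nu (a n) <=
  \sum_(1 <= j < n.+1) a j `^ nu * (prob_abs_lt (a j) - prob_abs_lt (a j.-1)).
Proof.
move=> nu_ge0 a0 a_nd.
have w_ge0 j : 0 <= a j `^ nu by exact: powR_ge0.
pose g x := (`|X x| `^ nu * (`|X x| < a n)%R%:R)%:E.
have g_ge0 x : (0 <= g x)%E by rewrite lee_fin mulr_ge0 ?powR_ge0.
have g_le : (\int[P]_x g x <=
    \int[P]_x \sum_(1 <= j < n.+1) (a j `^ nu * \1_(slab a j) x)%:E)%E.
  apply: ge0_le_integral => //; first exact: measurable_abs_powR_lt.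
  - apply: emeasurable_sum => j; apply/measurable_EFinP/measurable_funM.
      exact: measurable_cst.
    by apply: measurable_indic; apply: measurableD; exact: measurable_abs_lt.
  move=> x _; rewrite /g sumEFin lee_fin.
  have [Xx_lt|_] := boolP (`|X x| < a n); last first.
    by rewrite mulr0 big_nat sumr_ge0 // => j _; rewrite mulr_ge0.
  rewrite mulr1; under eq_big_nat => j _ do rewrite indicE in_setD /in_mem /= /in_set !asboolb.
  by apply: powR_le_sum_slabs; rewrite ?a0.
rewrite -lee_fin -(integral_sum_slabs _ _ n a_nd w_ge0) /trunc_moment -/g fineK //.
rewrite ge0_fin_numE ?integral_ge0 //; apply: le_lt_trans g_le _.
by rewrite integral_sum_slabs // ltry.
Qed.

End AbsoluteValueLaw.

Lemma tail_sum_le_of_series {R : realType} (tau b : nat -> R) (nu theta B : R) j m :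
  (forall n, (1 <= n)%N -> 0 <= tau n) -> (forall n, (1 <= n)%N -> 0 < b n) ->
  0 < theta -> (1 <= j)%N ->
  ((b j `^ (nu * theta) / j%:R `^ (theta - 1))%:E *
     \sum_(j <= k <oo) (k%:R `^ theta * tau k / b k `^ (nu * theta))%:E <= B%:E)%E ->
  \sum_(j <= k < m) tau k * (k%:R / b k `^ nu) `^ theta <=
  B * (j%:R / b j `^ nu) `^ (theta - 1) / b j `^ nu.
Proof.
move=> tau_ge0 b_gt0 theta_gt0 j1 series_le.
have bj_gt0 := b_gt0 j j1.
have bnu_gt0 : 0 < b j `^ nu by rewrite powR_gt0.
set A := b j `^ (nu * theta) / j%:R `^ (theta - 1).
have A_gt0 : 0 < A by rewrite divr_gt0 ?powR_gt0 // ltr0n.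
have termE k : (j <= k < m)%N ->
    tau k * (k%:R / b k `^ nu) `^ theta = k%:R `^ theta * tau k / b k `^ (nu * theta).
  move=> /andP[jk _]; have bk_gt0 := b_gt0 k (leq_trans j1 jk).
  by rewrite powR_div ?powR_ge0 // powRrM; ring.
rewrite (eq_big_nat _ _ termE) [leRHS](_ : _ = B / A); last first.
  rewrite powR_div ?powR_ge0 // /A powRrM.
  rewrite -[in RHS](mulr_powRB1 (ltW bnu_gt0) theta_gt0).
  by field; rewrite !gt_eqF ?powR_gt0 ?ltr0n.
rewrite ler_pdivlMr // mulrC -lee_fin EFinM -sumEFin; apply: le_trans series_le.
apply: lee_wpmul2l; first by rewrite lee_fin ltW.
apply: nneseries_lim_ge => k jk _.
rewrite lee_fin divr_ge0 ?powR_ge0 // mulr_ge0 ?powR_ge0 //.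
exact: tau_ge0 _ (leq_trans j1 jk).
Qed.

Lemma nneseries_lty_of_bounded {R : realType} (u : nat -> R) (K : R) :
  (forall n, (1 <= n)%N -> 0 <= u n) -> (forall m, \sum_(1 <= n < m) u n <= K) ->
  (\sum_(1 <= n <oo) (u n)%:E < +oo)%E.
Proof.
move=> u_ge0 sum_le; apply: le_lt_trans (ltry K).
apply: lime_le; first by apply: is_cvg_nneseries => n n1 _; rewrite lee_fin u_ge0.
by apply: nearW => m; rewrite sumEFin lee_fin.
Qed.

Lemma sum_le_fine_nneseries {R : realType} (u : nat -> R) m :
  (forall n, (1 <= n)%N -> 0 <= u n) -> (\sum_(1 <= n <oo) (u n)%:E < +oo)%E ->
  \sum_(1 <= n < m) u n <= fine (\sum_(1 <= n <oo) (u n)%:E).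
Proof.
move=> u_ge0 series_lty; rewrite -lee_fin fineK.
  by rewrite -sumEFin; apply: nneseries_lim_ge => n n1 _; rewrite lee_fin u_ge0.
by rewrite ge0_fin_numE // nneseries_ge0 // => n n1 _; rewrite lee_fin u_ge0.
Qed.

Section Slabs.
Context {d} {T : measurableType d} {R : realType} {P : probability T R}.
Variables (X : {RV P >-> R}) (b : nat -> R).
Hypotheses (b_gt0 : forall n, (1 <= n)%N -> 0 < b n)
  (b_nd : forall m n, (1 <= m)%N -> (m <= n)%N -> b m <= b n).

Definition slab_prob (j : nat) : R :=
  prob_abs_lt X (level b j) - prob_abs_lt X (level b j.-1).

Lemma slab_prob_ge0 j : 0 <= slab_prob j.
Proof. by rewrite subr_ge0 prob_abs_lt_le // level_nondecreasing // leq_pred. Qed.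

Lemma slab_prob1_le1 : slab_prob 1%N <= 1.
Proof.
rewrite /slab_prob /=.
by have := prob_abs_lt_le1 X (b 1%N); have := prob_abs_lt_ge0 X 0; lra.
Qed.

Lemma trunc_moment_le_slabs (nu : R) n : 0 <= nu -> (1 <= n)%N ->
  trunc_moment X nu (b n) <= \sum_(1 <= j < n.+1) b j `^ nu * slab_prob j.
Proof.
move=> nu_ge0; case: n => // n _.
apply: le_trans (trunc_moment_le X (level b) nu n.+1 nu_ge0 (erefl : level b 0 = 0)
  (level_nondecreasing b b_gt0 b_nd)) _.
by apply: ler_sum_nat => -[|j].
Qed.

Lemma sum_slab_prob_Tsum_bounded (tau : nat -> R) :
  (forall n, (1 <= n)%N -> 0 <= tau n) ->
  (\sum_(1 <= n <oo) ((tau n * n%:R)%:E * P [set x | (b n <= `|X x|)%R]) < +oo)%E ->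
  exists M, forall m, \sum_(2 <= i < m) slab_prob i * Tsum tau i.-1 <= M.
Proof.
move=> tau_ge0.
pose u n := n%:R * tau n * (1 - prob_abs_lt X (b n)).
have u_ge0 n : (1 <= n)%N -> 0 <= u n.
  by move=> n1; rewrite !mulr_ge0 ?tau_ge0 // subr_ge0 prob_abs_lt_le1.
have -> : (\sum_(1 <= n <oo) ((tau n * n%:R)%:E * P [set x | (b n <= `|X x|)%R]) =
    \sum_(1 <= n <oo) (u n)%:E)%E.
  by apply: eq_eseriesr => n _; rewrite probability_abs_ge -EFinM [tau n * _]mulrC.
move=> tail_lty; exists (fine (\sum_(1 <= n <oo) (u n)%:E)%E).
apply: (sum_increments_Tsum_le tau (fun k => prob_abs_lt X (level b k))) => // [k|m].
  exact: prob_abs_lt_le1.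
apply: le_trans (sum_le_fine_nneseries _ m u_ge0 tail_lty).
by apply: ler_sum_nat => -[|n].
Qed.

End Slabs.

Theorem lemma5 (d : measure_display) (T : measurableType d) (R : realType)
  (P : probability T R) (X : {RV P >-> R}) (tau b : nat -> R) (nu C theta : R) :
  (forall n, (1 <= n)%N -> 0 <= tau n) ->
  (forall n, (1 <= n)%N -> 0 < b n) ->
  (forall m n, (1 <= m)%N -> (m <= n)%N -> b m <= b n) ->
  (\sum_(1 <= n <oo) ((tau n * n%:R)%:E * P [set x | (b n <= `|X x|)%R]) < +oo)%E ->
  0 <= nu -> 0 < C -> 1 <= theta ->
  (forall n, (2 <= n)%N ->
     ((powR (b n) (nu * theta) / powR n%:R (theta - 1))%:E *
      \sum_(n <= k <oo) ((powR k%:R theta * tau k / powR (b k) (nu * theta))%:E)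
      <= (C * Tsum tau n.-1)%:E)%E) ->
  (forall n k, (2 <= n)%N -> (n <= k)%N ->
     k%:R * powR (b n) nu / powR (b k) nu <= C * Tsum tau n.-1) ->
  (\sum_(1 <= n <oo)
     ((tau n * powR (n%:R * trunc_moment X nu (b n) / powR (b n) nu) theta)%:E)
   < +oo)%E.
Proof.
move=> tau_ge0 b_gt0 b_nd tail_lty nu_ge0 C_gt0 theta_ge1 tail_series_le ratio_le.
pose c n := b n `^ nu.
have c_gt0 n : (1 <= n)%N -> 0 < c n by move=> n1; rewrite powR_gt0 ?b_gt0.
have c12 : c 1%N <= c 2%N.
  by apply: ge0_ler_powR; rewrite ?nnegrE ?b_nd //; apply/ltW/b_gt0.
have tail_le j m : (2 <= j)%N -> \sum_(j <= k < m) tau k * (k%:R / c k) `^ theta <=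
    C * Tsum tau j.-1 * (j%:R / c j) `^ (theta - 1) / c j.
  move=> j2; apply: tail_sum_le_of_series (tail_series_le j j2) => //; first lra.
  exact: ltnW.
have [M abel_le] := sum_slab_prob_Tsum_bounded X b tau tau_ge0 tail_lty.
have [K sums_le] := sum_powR_ratio_psum_bounded tau_ge0 c_gt0 c12
  (slab_prob_ge0 X b b_gt0 b_nd) (slab_prob1_le1 X b) C_gt0 theta_ge1 tail_le ratio_le abel_le.
apply: (nneseries_lty_of_bounded _ K) => [n n1|m].
  by rewrite mulr_ge0 ?tau_ge0 ?powR_ge0.
apply: le_trans (sums_le m); apply: ler_sum_nat => n /andP[n1 _].
have moment_ge0 : 0 <= n%:R * trunc_moment X nu (b n) / c n.
  by rewrite !mulr_ge0 ?invr_ge0 ?powR_ge0 ?trunc_moment_ge0.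
have moment_le : n%:R * trunc_moment X nu (b n) / c n <=
    n%:R / c n * \sum_(1 <= j < n.+1) c j * slab_prob X b j.
  rewrite mulrAC; apply: ler_wpM2l; first by rewrite divr_ge0 ?powR_ge0.
  exact: trunc_moment_le_slabs.
apply: ler_wpM2l; first exact: tau_ge0.
by apply: ge0_ler_powR; rewrite ?nnegrE ?(le_trans moment_ge0 moment_le) //; lra.
Qed.
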